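(* Let $\epsilon>0$ and $\beta\ge 2+\epsilon$ be constants, let $n$ be even, and let $G=G(n,p)$ be the Erdős–Rényi random graph on $V=\{1,\dots,n\}$ with $p=\beta\log n/n$. Fix, independently of the random graph, any two disjoint sets $N_1,N_2\subseteq V$ with $|N_1|=|N_2|=n/2$. Then, with probability tending to $1$ as $n\to\infty$: (i) $N_1,N_2$ form a $2$-partition of $G$; (ii) $M^G_{k,n}\le 2M^C_{k,n/2}+2$ for every $k\ge1$, which is $O(2k\log(n/(2k)))+2$.
   Context: $G(n,p)$ includes each of the $\binom n2$ possible edges independently with probability $p$. A set $S\subseteq V$ is a hub for $U\subseteq V$ if the induced subgraph $G_S$ is connected and every $u\in U$ has a neighbor in $S$. Pairwise disjoint sets $N_1,\dots,N_r$ form an $r$-partition of $G$ if $\bigcup_i N_i=V$ and, for every $i$, $V\setminus N_i$ is a hub for $N_i$. A measurement matrix for $G$ is a $0$-$1$ matrix with columns indexed by $V$ in which every nonzero row has a support that induces a connected subgraph of $G$. A vector is $k$-sparse if it has at most $k$ nonzero entries. $A$ identifies all $k$-sparse vectors if $Ax_1\ne Ax_2$ for every two distinct $k$-sparse $x_1,x_2\in\mathbb{R}^n$. $M^G_{k,n}$ is the minimum number of rows of a measurement matrix for $G$ that identifies all $k$-sparse vectors. $M^C_{k,N}$ is the minimum number of rows of an arbitrary $0$-$1$ matrix with $N$ columns that identifies all $k$-sparse vectors in $\mathbb{R}^N$. *)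

From Stdlib Require Import Reals ClassicalEpsilon.
From mathcomp Require Import all_boot.
Set Implicit Arguments. Unset Strict Implicit. Unset Printing Implicit Defensive.

(* A graph on V = 'I_n is a set E of pairs (u,v) with u < v. *)
Definition Epairs (n : nat) : {set 'I_n * 'I_n} :=
  [set e : 'I_n * 'I_n | (nat_of_ord e.1 < nat_of_ord e.2)%N].

Definition adj (n : nat) (E : {set 'I_n * 'I_n}) : rel 'I_n :=
  fun u v => ((u, v) \in E) || ((v, u) \in E).

Definition induced_connected (n : nat) (E : {set 'I_n * 'I_n}) (S : {set 'I_n}) : Prop :=
  forall u v, u \in S -> v \in S ->
    connect (fun a b => [&& a \in S, b \in S & adj E a b]) u v.

Definition hub (n : nat) (E : {set 'I_n * 'I_n}) (S U : {set 'I_n}) : Prop :=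
  induced_connected E S /\ forall u, u \in U -> exists2 s, s \in S & adj E u s.

Definition r_partition (n r : nat) (E : {set 'I_n * 'I_n}) (N : 'I_r -> {set 'I_n}) : Prop :=
  (forall i j, i != j -> [disjoint N i & N j]) /\
  \bigcup_(i < r) N i = [set: 'I_n] /\
  forall i, hub E (~: N i) (N i).

(* A 0-1 matrix with m rows and N columns is given by the supports of its rows. *)
Definition Amul (N m : nat) (A : 'I_m -> {set 'I_N}) (x : 'I_N -> R) (r : 'I_m) : R :=
  \big[Rplus/R0]_(j in A r) x j.

Definition sparse (N k : nat) (x : 'I_N -> R) : Prop :=
  exists S : {set 'I_N}, (#|S| <= k)%N /\ forall j, j \notin S -> x j = R0.

Definition identifies (N m : nat) (A : 'I_m -> {set 'I_N}) (k : nat) : Prop :=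
  forall x1 x2 : 'I_N -> R, sparse k x1 -> sparse k x2 ->
    (forall r, Amul A x1 r = Amul A x2 r) -> forall j, x1 j = x2 j.

Definition measurement_matrix (n m : nat) (E : {set 'I_n * 'I_n}) (A : 'I_m -> {set 'I_n}) : Prop :=
  forall r, A r != set0 -> induced_connected E (A r).

Definition is_MG (n : nat) (E : {set 'I_n * 'I_n}) (k M : nat) : Prop :=
  (exists A : 'I_M -> {set 'I_n}, measurement_matrix E A /\ identifies A k) /\
  forall m (A : 'I_m -> {set 'I_n}), measurement_matrix E A -> identifies A k -> (M <= m)%N.

Definition is_MC (N k M : nat) : Prop :=
  (exists A : 'I_M -> {set 'I_N}, identifies A k) /\
  forall m (A : 'I_m -> {set 'I_N}), identifies A k -> (M <= m)%N.

Definition Prob_Gnp (n : nat) (p : R) (P : {set 'I_n * 'I_n} -> Prop) : R :=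
  \big[Rplus/R0]_(E : {set 'I_n * 'I_n} | E \subset Epairs n)
     (if excluded_middle_informative (P E)
      then Rmult (pow p #|E|) (pow (Rminus 1 p) (#|Epairs n| - #|E|)) else R0).

Definition two_sets (n : nat) (A B : {set 'I_n}) : 'I_2 -> {set 'I_n} :=
  fun i => if nat_of_ord i == 0%N then A else B.

From Stdlib Require Import Reals Lra Classical ClassicalEpsilon.
From mathcomp Require Import all_boot zify Rstruct.
Set Implicit Arguments. Unset Strict Implicit. Unset Printing Implicit Defensive.

(* Given an identifying 0-1 matrix A with M rows
   for R^{n/2}, the 2M + 2 rows f1(A_r) u N2, f2(A_r) u N1, N2, N1 form a
   measurement matrix for G (each row is a connected hub plus vertices it
   dominates), and subtracting the measurement of N2 (resp. N1) from the
   others applies A to the restriction of x to N1 (resp. N2), which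
   identifies sparse vectors (measurement_bound).

   S is a hub for W as soon as G has an edge in every
   cut (T, S \ T) with |T| <= |S|/2 and between each vertex of W and S
   (hub_of_witnesses).  A fixed set F of pairs is avoided by G(n, p) with
   probability (1 - p)^|F| (prob_avoid), so a union bound (union_bound)
   bounds the failure probability by hub_cost, using |cut| >= |T| (|S| - |T|)
   and splitting the cuts at |T| = slack eps * |S| (hub_witnesses_cost).
   Finally hub_cost is at most 4c for n = e^L and L large (hub_cost_small),
   i.e. for all large even n (hub_cost_eventually_small). *)

Section Cuts.
Variable n : nat.
Implicit Types (X Y S T : {set 'I_n}) (E : {set 'I_n * 'I_n}).

Definition cut X Y : {set 'I_n * 'I_n} :=
  [set e in Epairs n | ((e.1 \in X) && (e.2 \in Y)) || ((e.1 \in Y) && (e.2 \in X))].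

Lemma cut_sub X Y : cut X Y \subset Epairs n.
Proof. by apply/subsetP => e; rewrite inE => /andP []. Qed.

Lemma cutC X Y : cut X Y = cut Y X.
Proof. by apply/setP => e; rewrite !inE orbC. Qed.

Definition sort_pair (ab : 'I_n * 'I_n) : 'I_n * 'I_n :=
  if (ab.1 < ab.2)%N then ab else (ab.2, ab.1).

Lemma cut_card X Y : [disjoint X & Y] -> (#|X| * #|Y| <= #|cut X Y|)%N.
Proof.
move=> dXY.
have notXY a : a \in X -> a \in Y -> False.
  by move=> aX aY; move/disjointFr: dXY => /(_ a aX); rewrite aY.
rewrite -cardsX -(@card_in_imset _ _ sort_pair).
  apply/subset_leq_card/subsetP => e /imsetP [[a b]].
  rewrite inE /= => /andP [aX bY] ->; rewrite /sort_pair /= !inE /=.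
  case: (ltngtP a b) => [ab | ba | /val_inj eab] /=.
  - by rewrite ab aX bY.
  - by rewrite ba aX bY orbT.
  - by case: (notXY a aX); rewrite eab.
move=> [a b] [a' b']; rewrite !inE /= => /andP [aX bY] /andP [aX' bY'].
rewrite /sort_pair /=; case: ifP => _; case: ifP => _ //.
- by case=> eab eba; subst; case: (notXY a').
- by case=> eab eba; subst; case: (notXY b').
- by case=> -> ->.
Qed.

Lemma cut_edge E X Y : ~~ [disjoint E & cut X Y] ->
  exists a b, [/\ a \in X, b \in Y & adj E a b].
Proof.
rewrite -setI_eq0 => /set0Pn [[a b]]; rewrite !inE /= => /andP [abE /andP [_ H]].
case/orP: H => /andP [h1 h2]; first by exists a, b; rewrite /adj abE.
by exists b, a; rewrite /adj abE orbT.
Qed.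

Lemma connected_of_cuts E S :
  (forall T, T \subset S -> (0 < #|T|)%N -> (#|T| < #|S|)%N ->
     ~~ [disjoint E & cut T (S :\: T)]) ->
  induced_connected E S.
Proof.
move=> Hcut u v uS vS.
set rel := fun a b => [&& a \in S, b \in S & adj E a b].
pose T := [set w in S | connect rel u w].
have sTS : T \subset S by apply/subsetP => w; rewrite inE => /andP [].
have uT : u \in T by rewrite inE uS connect0.
suff ST : T = S by move: vS; rewrite -ST inE => /andP [].
apply/eqP; rewrite eqEcard sTS /= leqNgt; apply/negP => ltTS.
have T0 : (0 < #|T|)%N by apply/card_gt0P; exists u.
case/cut_edge: (Hcut T sTS T0 ltTS) => a [b [aT bST ab]].
move: bST aT; rewrite !inE => /andP [/negP bT bS] /andP [aS ua]; apply: bT.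
by rewrite bS; apply: connect_trans ua (connect1 _); rewrite /rel aS bS ab.
Qed.

(* By symmetry of cuts, it suffices to check the parts of size at most |S|/2. *)
Lemma connected_of_small_cuts E S :
  (forall T, T \subset S -> (0 < #|T|)%N -> (2 * #|T| <= #|S|)%N ->
     ~~ [disjoint E & cut T (S :\: T)]) ->
  induced_connected E S.
Proof.
move=> Hcut; apply: connected_of_cuts => T sTS T0 ltTS.
have cST : #|S :\: T| = (#|S| - #|T|)%N by rewrite cardsD (setIidPr sTS).
case: (leqP (2 * #|T|) #|S|) => hT; first exact: Hcut.
have STT : S :\: (S :\: T) = T by rewrite setDDr setDv set0U (setIidPr sTS).
rewrite cutC -[X in cut _ X]STT; apply: Hcut; first exact: subsetDl.
  by rewrite cST subn_gt0.
by rewrite cST; lia.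
Qed.

Lemma connected_setU_nbrs E S X :
  induced_connected E S -> (forall u, u \in X -> exists2 s, s \in S & adj E u s) ->
  induced_connected E (X :|: S).
Proof.
move=> cS nX.
set rS := fun a b => [&& a \in S, b \in S & adj E a b].
set rU := fun a b => [&& a \in X :|: S, b \in X :|: S & adj E a b].
have rSU a b : connect rS a b -> connect rU a b.
  apply: connect_sub => {}a {}b /and3P [aS bS ab]; apply: connect1.
  by rewrite /rU !inE aS bS !orbT ab.
have toS u : u \in X :|: S -> exists2 s, s \in S & connect rU u s /\ connect rU s u.
  rewrite inE => /orP [uX | uS]; last by exists u => //; split; apply: connect0.
  have [s sS us] := nX u uX; exists s => //.
  by split; apply: connect1; rewrite /rU !inE uX sS !orbT //= /adj orbC.
move=> u v uU vU; have [su suS [u_su _]] := toS u uU; have [sv svS [_ sv_v]] := toS v vU.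
exact: connect_trans u_su (connect_trans (rSU _ _ (cS _ _ suS svS)) sv_v).
Qed.

End Cuts.

Local Open Scope R_scope.

Lemma sum_le (I : Type) (r : seq I) (P : pred I) (f g : I -> R) :
  (forall i, P i -> f i <= g i) ->
  \big[Rplus/R0]_(i <- r | P i) f i <= \big[Rplus/R0]_(i <- r | P i) g i.
Proof. by move=> fg; apply: (big_ind2 Rle) => //; [lra | move=> *; lra]. Qed.

Lemma sum_ge0 (I : Type) (r : seq I) (P : pred I) (f : I -> R) :
  (forall i, P i -> 0 <= f i) -> 0 <= \big[Rplus/R0]_(i <- r | P i) f i.
Proof. by move=> f0; apply: (big_ind (Rle 0)) => //; [lra | move=> *; lra]. Qed.

Lemma prod_ge0 (I : Type) (r : seq I) (P : pred I) (f : I -> R) :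
  (forall i, P i -> 0 <= f i) -> 0 <= \big[Rmult/R1]_(i <- r | P i) f i.
Proof. by move=> f0; apply: (big_ind (Rle 0)) => //; [lra | exact: Rmult_le_pos]. Qed.

Lemma le_sum_mem (I : eqType) (r : seq I) (f : I -> R) x :
  (forall i, 0 <= f i) -> x \in r -> f x <= \big[Rplus/R0]_(i <- r) f i.
Proof.
move=> f0; elim: r => //= y r IH; rewrite inE big_cons => /orP [/eqP -> | /IH].
  by have := @sum_ge0 _ r xpredT f (fun i _ => f0 i); lra.
by have := f0 y; lra.
Qed.

Lemma sum_le_subpred (I : finType) (P Q : pred I) (g : I -> R) :
  (forall i, P i -> Q i) -> (forall i, Q i -> 0 <= g i) ->
  \big[Rplus/R0]_(i | P i) g i <= \big[Rplus/R0]_(i | Q i) g i.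
Proof.
move=> PQ g0; rewrite big_mkcond [X in _ <= X]big_mkcond; apply: sum_le => i _.
case: (boolP (P i)) => Pi; first by rewrite (PQ _ Pi); apply: Rle_refl.
by case: (boolP (Q i)) => Qi; [apply: g0 | apply: Rle_refl].
Qed.

Lemma prod_const_set (T : finType) (A : {set T}) c :
  \big[Rmult/R1]_(e : T) (if e \in A then c else 1) = c ^ #|A|.
Proof. by rewrite -big_mkcond big_const; elim: #|A| => //= k ->. Qed.

Lemma sum_const_set (T : finType) (A : {set T}) c :
  \big[Rplus/R0]_(e in A) c = INR #|A| * c.
Proof.
rewrite big_const; elim: #|A| => [|k IH]; first by rewrite /=; ring.
by rewrite S_INR /= IH; ring.
Qed.

Lemma sum_subsets_prod (T : finType) (g : T -> bool -> R) :
  \big[Rplus/R0]_(E : {set T}) \big[Rmult/R1]_(e : T) g e (e \in E)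
  = \big[Rmult/R1]_(e : T) (g e true + g e false).
Proof.
have -> : \big[Rmult/R1]_(e : T) (g e true + g e false)
        = \big[Rmult/R1]_(e : T) \big[Rplus/R0]_(b : bool) g e b.
  by apply: eq_bigr => e _; rewrite big_bool /= Rplus_comm.
rewrite bigA_distr_bigA (reindex (fun f : {ffun T -> bool} => [set x | f x])) /=.
  by apply: eq_bigr => f _; apply: eq_bigr => e _; rewrite inE.
exists (fun A : {set T} => [ffun x => x \in A]) => [f _ | A _].
  by apply/ffunP => x; rewrite ffunE inE.
by apply/setP => x; rewrite inE ffunE.
Qed.

Lemma sum_pow_subsets (T : finType) (S : {set T}) (y : R) :
  \big[Rplus/R0]_(A : {set T} | A \subset S) y ^ #|A| = (1 + y) ^ #|S|.
Proof.
pose g e (b : bool) := if e \in S then (if b then y else 1) else (if b then 0 else 1).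
transitivity (\big[Rplus/R0]_(A : {set T}) \big[Rmult/R1]_(e : T) g e (e \in A)).
  rewrite big_mkcond; apply: eq_bigr => A _.
  case: (boolP (A \subset S)) => sAS.
    rewrite -prod_const_set; apply: eq_bigr => e _; rewrite /g.
    by case: (boolP (e \in A)) => eA; [rewrite (subsetP sAS _ eA) | case: (e \in S)].
  case/subsetPn: sAS => e eA eS.
  by rewrite (bigD1 e) //= /g (negbTE eS) eA Rmult_0_l.
rewrite sum_subsets_prod -prod_const_set; apply: eq_bigr => e _; rewrite /g.
by case: (e \in S); ring.
Qed.

Section RandomGraph.
Variables (n : nat) (p : R).
Hypothesis hp : 0 <= p <= 1.
Local Notation pair := ('I_n * 'I_n)%type.
Implicit Types (E F : {set pair}) (Q : {set pair} -> Prop).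

Definition edge_weight (e : pair) (b : bool) : R :=
  if e \in Epairs n then (if b then p else 1 - p) else (if b then 0 else 1).

Definition weight (E : {set pair}) : R := \big[Rmult/R1]_(e : pair) edge_weight e (e \in E).

Lemma weight_ge0 E : 0 <= weight E.
Proof. by apply: prod_ge0 => e _; rewrite /edge_weight; do 2 case: (_ \in _); lra. Qed.

Lemma weight_graph E : E \subset Epairs n ->
  weight E = p ^ #|E| * (1 - p) ^ (#|Epairs n| - #|E|).
Proof.
move=> sEU; rewrite -(prod_const_set E) -[(_ - _)%N](_ : #|Epairs n :\: E| = _).
  rewrite -prod_const_set -big_split /=; apply: eq_bigr => e _.
  rewrite /edge_weight in_setD; case: (boolP (e \in E)) => eE.
    by rewrite (subsetP sEU _ eE) /=; ring.
  by case: (e \in Epairs n) => /=; ring.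
by rewrite cardsD (setIidPr sEU).
Qed.

Lemma weight_nongraph E : ~~ (E \subset Epairs n) -> weight E = 0.
Proof.
case/subsetPn => e eE eU.
by rewrite /weight (bigD1 e) //= /edge_weight (negbTE eU) eE Rmult_0_l.
Qed.

Lemma Prob_Gnp_weight (Q : {set pair} -> Prop) :
  Prob_Gnp p Q =
  \big[Rplus/R0]_(E : {set pair}) (if excluded_middle_informative (Q E) then weight E else 0).
Proof.
rewrite /Prob_Gnp big_mkcond; apply: eq_bigr => E _.
case: (boolP (E \subset Epairs n)) => sEU; case: excluded_middle_informative => QE //.
- by rewrite weight_graph.
- by rewrite weight_nongraph.
Qed.

Lemma prob_avoid (F : {set pair}) : F \subset Epairs n ->
  \big[Rplus/R0]_(E : {set pair}) (if [disjoint E & F] then weight E else 0) = (1 - p) ^ #|F|.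
Proof.
move=> sFU.
pose g e b := edge_weight e b * (if e \in F then (if b then 0 else 1) else 1).
transitivity (\big[Rplus/R0]_(E : {set pair}) \big[Rmult/R1]_(e : pair) g e (e \in E)).
  apply: eq_bigr => E _; rewrite /g big_split /=.
  case: (boolP [disjoint E & F]) => dEF.
    rewrite [X in _ = _ * X]big1 ?Rmult_1_r // => e _.
    case: (boolP (e \in F)) => // eF.
    by rewrite (disjointFl dEF eF).
  move: dEF; rewrite -setI_eq0 => /set0Pn [e]; rewrite inE => /andP [eE eF].
  by rewrite [X in _ = _ * X](bigD1 e) //= eF eE Rmult_0_l Rmult_0_r.
rewrite sum_subsets_prod -prod_const_set; apply: eq_bigr => e _; rewrite /g /edge_weight.
case: (boolP (e \in F)) => eF; first by rewrite (subsetP sFU _ eF); ring.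
by case: (e \in Epairs n); ring.
Qed.

Lemma weight_total : \big[Rplus/R0]_(E : {set pair}) weight E = 1.
Proof.
rewrite -[1](pow_O (1 - p)) -(cards0 pair) -(prob_avoid (sub0set _)).
by apply: eq_bigr => E _; rewrite -setI_eq0 setI0 eqxx.
Qed.

Lemma union_bound (Q : {set pair} -> Prop) (s : seq {set pair}) :
  (forall F, F \in s -> F \subset Epairs n) ->
  (forall E, E \subset Epairs n -> (forall F, F \in s -> ~~ [disjoint E & F]) -> Q E) ->
  1 - \big[Rplus/R0]_(F <- s) (1 - p) ^ #|F| <= Prob_Gnp p Q.
Proof.
move=> sU HQ.
pose avoid E F := if [disjoint E & F] then weight E else 0.
pose failure E := if excluded_middle_informative (Q E) then 0 else weight E.
have avoid_ge0 E F : 0 <= avoid E F.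
  by rewrite /avoid; case: ifP => _; [exact: weight_ge0 | lra].
have failure_avoid E : failure E <= \big[Rplus/R0]_(F <- s) avoid E F.
  rewrite /failure; case: excluded_middle_informative => QE.
    exact: sum_ge0.
  case: (boolP (E \subset Epairs n)) => sEU; last first.
    by rewrite weight_nongraph //; apply: sum_ge0.
  have [F Fs dEF] : exists2 F, F \in s & [disjoint E & F].
    apply: NNPP => noF; apply: QE; apply: HQ => // F Fs.
    by apply/negP => dEF; apply: noF; exists F.
  by have := le_sum_mem (avoid_ge0 E) Fs; rewrite /avoid dEF.
have -> : \big[Rplus/R0]_(F <- s) (1 - p) ^ #|F|
        = \big[Rplus/R0]_(E : {set pair}) \big[Rplus/R0]_(F <- s) avoid E F.
  rewrite exchange_big big_seq [RHS]big_seq; apply: eq_bigr => F /sU sFU.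
  by rewrite /avoid prob_avoid.
have -> : Prob_Gnp p Q = 1 - \big[Rplus/R0]_(E : {set pair}) failure E.
  rewrite Prob_Gnp_weight -weight_total.
  rewrite [X in _ = X - _](_ : _ = \big[Rplus/R0]_(E : {set pair})
     (if excluded_middle_informative (Q E) then weight E else 0)
     + \big[Rplus/R0]_(E : {set pair}) failure E); first ring.
  rewrite -big_split /=; apply: eq_bigr => E _.
  by rewrite /failure; case: excluded_middle_informative => QE /=; ring.
suff : \big[Rplus/R0]_(E : {set pair}) failure E
       <= \big[Rplus/R0]_(E : {set pair}) \big[Rplus/R0]_(F <- s) avoid E F by lra.
by apply: sum_le => E _; exact: failure_avoid.
Qed.

End RandomGraph.

Lemma pow_decr (q : R) (a b : nat) : 0 <= q <= 1 -> (a <= b)%N -> q ^ b <= q ^ a.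
Proof.
move=> hq /subnKC <-; rewrite pow_add.
have : q ^ (b - a)%N <= 1 by rewrite -(pow1 (b - a)); apply: pow_incr.
by have := pow_le q a (proj1 hq); nra.
Qed.

Lemma exp_le x y : x <= y -> exp x <= exp y.
Proof. by case/Rle_lt_or_eq_dec => [/exp_increasing/Rlt_le | ->]; last apply: Rle_refl. Qed.

Lemma exp_ge0 x : 0 <= exp x.
Proof. exact/Rlt_le/exp_pos. Qed.

Lemma exp_pow a (k : nat) : exp a ^ k = exp (INR k * a).
Proof.
elim: k => [|k IH]; first by rewrite /= Rmult_0_l exp_0.
by rewrite S_INR /= IH -exp_plus; congr exp; ring.
Qed.

Lemma pow_le_exp x (k : nat) : -1 <= x -> (1 + x) ^ k <= exp (INR k * x).
Proof. by move=> hx; rewrite -exp_pow; apply: pow_incr; have := exp_ineq1_le x; lra. Qed.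

(* Avoiding a cut: for a part of size t <= m/2 of a set of size m, the
   (1 - p)^{t(m-t)} bound is split according to whether t <= K or not. *)
Lemma cut_avoid_bound p K (t m : nat) : 0 <= p <= 1 -> 0 <= K -> (2 * t <= m)%N ->
  (1 - p) ^ (t * (m - t)) <= exp (- p * (INR m - K)) ^ t + exp (- p * K * INR m / 2).
Proof.
move=> hp hK htm.
have hm : 2 * INR t <= INR m.
  have : INR (2 * t) <= INR m by apply/le_INR/leP.
  by rewrite mult_INR.
have ht := pos_INR t.
have hexp : (1 - p) ^ (t * (m - t)) <= exp (- p * (INR t * (INR m - INR t))).
  rewrite -minus_INR; last by apply/leP; lia.
  by rewrite -mult_INR Rmult_comm; apply: pow_le_exp; lra.
have hy := pow_le (exp (- p * (INR m - K))) t (exp_ge0 _).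
have hz := exp_ge0 (- p * K * INR m / 2).
case: (Rle_lt_dec (INR t) K) => htK.
  rewrite exp_pow; suff : exp (- p * (INR t * (INR m - INR t)))
                          <= exp (INR t * (- p * (INR m - K))) by lra.
  apply: exp_le; have : 0 <= p * (INR t * (K - INR t)) by apply: Rmult_le_pos; nra.
  nra.
suff : exp (- p * (INR t * (INR m - INR t))) <= exp (- p * K * INR m / 2) by lra.
apply: exp_le.
have : K * (INR m / 2) <= INR t * (INR m - INR t) by nra.
have : 0 <= p by lra.
nra.
Qed.

Section HubWitnesses.
Variable n : nat.
Implicit Types (S W T : {set 'I_n}) (E : {set 'I_n * 'I_n}).

Definition small_parts S : {set {set 'I_n}} :=
  [set T : {set 'I_n} | [&& T \subset S, (0 < #|T|)%N & (2 * #|T| <= #|S|)%N]].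

(* Pair sets that a graph must meet for S to be a hub for W: the cuts of S
   along its small parts, and the cuts between each vertex of W and S. *)
Definition hub_witnesses S W : seq {set 'I_n * 'I_n} :=
  [seq cut T (S :\: T) | T <- enum (small_parts S)] ++ [seq cut [set u] S | u <- enum W].

Lemma hub_witnesses_sub S W F : F \in hub_witnesses S W -> F \subset Epairs n.
Proof. by rewrite mem_cat => /orP [] /mapP [x _ ->]; exact: cut_sub. Qed.

Lemma hub_of_witnesses S W E :
  (forall F, F \in hub_witnesses S W -> ~~ [disjoint E & F]) -> hub E S W.
Proof.
move=> hit; split.
  apply: connected_of_small_cuts => T sTS T0 T2; apply: hit.
  by rewrite mem_cat; apply/orP; left; apply: map_f; rewrite mem_enum inE sTS T0 T2.
move=> u uW; have /cut_edge [a [b [/set1P -> bS ab]]] : ~~ [disjoint E & cut [set u] S].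
  by apply: hit; rewrite mem_cat; apply/orP; right; apply: map_f; rewrite mem_enum.
by exists b.
Qed.

(* The bound on the probability that S fails to be a hub for W in G(n,p),
   for a set of size s, w vertices to dominate and a cut-off K. *)
Definition hub_cost (p K : R) (s w : nat) : R :=
  ((1 + exp (- p * (INR s - K))) ^ s - 1) + exp (- p * K * INR s / 2) * 2 ^ s
  + INR w * (1 - p) ^ s.

(* Small parts of size t <= K cost at most y^t, the others at most z; summing
   over all nonempty parts of S gives (1 + y)^|S| - 1 + z 2^|S|. *)
Lemma cut_witnesses_cost S p K : 0 <= p <= 1 -> 0 <= K ->
  \big[Rplus/R0]_(T in small_parts S) (1 - p) ^ #|cut T (S :\: T)| <=
  ((1 + exp (- p * (INR #|S| - K))) ^ #|S| - 1) + exp (- p * K * INR #|S| / 2) * 2 ^ #|S|.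
Proof.
move=> hp hK.
set y := exp (- p * (INR #|S| - K)); set z := exp (- p * K * INR #|S| / 2).
have hy : 0 <= y by apply: exp_ge0.
have hz : 0 <= z by apply: exp_ge0.
have by_part : \big[Rplus/R0]_(T in small_parts S) (1 - p) ^ #|cut T (S :\: T)| <=
               \big[Rplus/R0]_(T in small_parts S) (y ^ #|T| + z).
  apply: sum_le => T; rewrite inE => /and3P [sTS T0 T2].
  have cST : #|S :\: T| = (#|S| - #|T|)%N by rewrite cardsD (setIidPr sTS).
  apply: Rle_trans (cut_avoid_bound hp hK T2); apply: pow_decr; first lra.
  rewrite -cST; apply/cut_card; rewrite disjoint_subset.
  by apply/subsetP => x; rewrite !inE => ->.
have to_nonempty : \big[Rplus/R0]_(T in small_parts S) (y ^ #|T| + z) <=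
                   \big[Rplus/R0]_(T : {set 'I_n} | (T \subset S) && (T != set0)) (y ^ #|T| + z).
  apply: sum_le_subpred => [T | T _]; last by have := pow_le y #|T| hy; lra.
  rewrite !inE => /and3P [-> T0 _] /=; apply/eqP => T0'.
  by move: T0; rewrite T0' cards0.
have all_parts : \big[Rplus/R0]_(T : {set 'I_n} | T \subset S) (y ^ #|T| + z) =
                 (1 + y) ^ #|S| + z * 2 ^ #|S|.
  rewrite big_split /= sum_pow_subsets; congr (_ + _).
  rewrite (_ : 2 = 1 + 1); last by ring.
  rewrite -(sum_pow_subsets S 1) big_distrr /=.
  by apply: eq_bigr => T _; rewrite pow1 Rmult_1_r.
have split_empty : \big[Rplus/R0]_(T : {set 'I_n} | T \subset S) (y ^ #|T| + z) =
    (1 + z) + \big[Rplus/R0]_(T : {set 'I_n} | (T \subset S) && (T != set0)) (y ^ #|T| + z).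
  by rewrite (bigD1 set0) ?sub0set //= cards0 pow_O.
by lra.
Qed.

(* Each vertex outside S has |S| potential edges into S. *)
Lemma nbr_witnesses_cost S W p : 0 <= p <= 1 -> [disjoint S & W] ->
  \big[Rplus/R0]_(u in W) (1 - p) ^ #|cut [set u] S| <= INR #|W| * (1 - p) ^ #|S|.
Proof.
move=> hp dSW; rewrite -sum_const_set; apply: sum_le => u uW.
apply: pow_decr; first lra.
rewrite -[#|S|]mul1n -(cards1 u); apply/cut_card; rewrite disjoint_sym.
by apply: disjointWr dSW; rewrite sub1set.
Qed.

Lemma hub_witnesses_cost S W p K : 0 <= p <= 1 -> 0 <= K -> [disjoint S & W] ->
  \big[Rplus/R0]_(F <- hub_witnesses S W) (1 - p) ^ #|F| <= hub_cost p K #|S| #|W|.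
Proof.
move=> hp hK dSW; rewrite big_cat !big_map !big_enum /=.
exact: Rplus_le_compat (cut_witnesses_cost S hp hK) (nbr_witnesses_cost hp dSW).
Qed.

End HubWitnesses.

Lemma sparse_comp (N h k : nat) (f : 'I_h -> 'I_N) (x : 'I_N -> R) :
  injective f -> sparse k x -> sparse k (fun i => x (f i)).
Proof.
move=> injf [S [cS xS]]; exists (f @^-1: S); split; last by move=> i; rewrite inE => /xS.
apply: leq_trans cS; rewrite -(card_imset _ injf); apply: subset_leq_card.
by apply/subsetP => j /imsetP [i]; rewrite inE => ? ->.
Qed.

Lemma sum_setU n (X Y : {set 'I_n}) (x : 'I_n -> R) : [disjoint X & Y] ->
  \big[Rplus/R0]_(j in X :|: Y) x j =
  \big[Rplus/R0]_(j in X) x j + \big[Rplus/R0]_(j in Y) x j.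
Proof. by move=> dXY; rewrite -bigU //; apply: eq_bigl => j; rewrite !inE. Qed.

Lemma identify_block n h M (A : 'I_M -> {set 'I_h}) k (P Q : {set 'I_n}) (f : 'I_h -> 'I_n) :
  identifies A k -> injective f -> (forall i, f i \in P) -> [disjoint P & Q] ->
  forall x1 x2, sparse k x1 -> sparse k x2 ->
  (forall r, \big[Rplus/R0]_(j in f @: A r :|: Q) x1 j
           = \big[Rplus/R0]_(j in f @: A r :|: Q) x2 j) ->
  \big[Rplus/R0]_(j in Q) x1 j = \big[Rplus/R0]_(j in Q) x2 j ->
  forall i, x1 (f i) = x2 (f i).
Proof.
move=> idA injf fP dPQ x1 x2 s1 s2 rowsQ sumQ.
apply: (idA _ _ (sparse_comp injf s1) (sparse_comp injf s2)) => r.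
have dAQ : [disjoint f @: A r & Q].
  by apply: disjointWl dPQ; apply/subsetP => j /imsetP [i _ ->].
have := rowsQ r; rewrite !sum_setU // sumQ !big_imset /Amul; last 2 first.
- by move=> a b _ _; apply: injf.
- by move=> a b _ _; apply: injf.
exact: Rplus_eq_reg_r.
Qed.

Lemma enum_of_card n h (N : {set 'I_n}) : #|N| = h -> exists f : 'I_h -> 'I_n,
  [/\ injective f, forall i, f i \in N & forall j, j \in N -> exists i, f i = j].
Proof.
move=> cN; exists (fun i => enum_val (cast_ord (esym cN) i)); split.
- by move=> i j /enum_val_inj /cast_ord_inj.
- by move=> i; apply: enum_valP.
move=> j jN; exists (cast_ord cN (enum_rank_in jN j)).
by rewrite cast_ordK enum_rankK_in.
Qed.

Section DoubledMatrix.
Variables (n h M : nat) (A : 'I_M -> {set 'I_h}) (N1 N2 : {set 'I_n}).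
Variables (f1 f2 : 'I_h -> 'I_n).
Hypotheses (f1N1 : forall i, f1 i \in N1) (f2N2 : forall i, f2 i \in N2).

Definition row_of (r : nat) : {set 'I_h} := if insub r is Some i then A i else set0.

Definition doubled_row (r : nat) : {set 'I_n} :=
  if (r < M)%N then f1 @: row_of r :|: N2
  else if (r < 2 * M)%N then f2 @: row_of (r - M) :|: N1
  else if r == (2 * M)%N then N2 else N1.

Definition doubled_matrix (r : 'I_(2 * M + 2)) : {set 'I_n} := doubled_row r.

Lemma doubled_row_low (i : 'I_M) : doubled_row i = f1 @: A i :|: N2.
Proof. by rewrite /doubled_row ltn_ord /row_of valK. Qed.

Lemma doubled_row_high (i : 'I_M) : doubled_row (M + i)%N = f2 @: A i :|: N1.
Proof.
have [lo hi] : (M + i < M)%N = false /\ (M + i < 2 * M)%N by have := ltn_ord i; lia.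
by rewrite /doubled_row lo hi addKn /row_of valK.
Qed.

Lemma doubled_row_N2 : doubled_row (2 * M)%N = N2.
Proof. by rewrite /doubled_row eqxx !ifF //; apply/negbTE; lia. Qed.

Lemma doubled_row_N1 : doubled_row (2 * M + 1)%N = N1.
Proof. by rewrite /doubled_row !ifF //; apply/negbTE; lia. Qed.

Lemma doubled_measurement E : hub E N2 N1 -> hub E N1 N2 -> measurement_matrix E doubled_matrix.
Proof.
move=> [c2 nbr1] [c1 nbr2] r _; rewrite /doubled_matrix /doubled_row.
case: ifP => _; [|case: ifP => _; [|case: ifP => _ //]].
- by apply: connected_setU_nbrs c2 _ => u /imsetP [i _ ->]; apply: nbr1.
- by apply: connected_setU_nbrs c1 _ => u /imsetP [i _ ->]; apply: nbr2.
Qed.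

Lemma doubled_identifies k : identifies A k -> injective f1 -> injective f2 ->
  [disjoint N1 & N2] ->
  (forall j, (exists i, f1 i = j) \/ (exists i, f2 i = j)) ->
  identifies doubled_matrix k.
Proof.
move=> idA inj1 inj2 dN onto x1 x2 s1 s2 same.
have agree r : (r < 2 * M + 2)%N ->
    \big[Rplus/R0]_(j in doubled_row r) x1 j = \big[Rplus/R0]_(j in doubled_row r) x2 j.
  by move=> lt; exact: (same (Ordinal lt)).
have on1 := identify_block idA inj1 f1N1 dN s1 s2.
have dN21 : [disjoint N2 & N1] by rewrite disjoint_sym.
have on2 := identify_block idA inj2 f2N2 dN21 s1 s2.
move=> j; case: (onto j) => [] [i <-].
- apply: on1 => [r|]; first by rewrite -doubled_row_low; apply: agree; have := ltn_ord r; lia.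
  by rewrite -doubled_row_N2; apply: agree; lia.
- apply: on2 => [r|]; first by rewrite -doubled_row_high; apply: agree; have := ltn_ord r; lia.
  by rewrite -doubled_row_N1; apply: agree; lia.
Qed.

End DoubledMatrix.

Lemma measurement_bound n h (E : {set 'I_n * 'I_n}) (N1 N2 : {set 'I_n}) k MG MC :
  [disjoint N1 & N2] -> (forall j, (j \in N1) || (j \in N2)) -> #|N1| = h -> #|N2| = h ->
  hub E N2 N1 -> hub E N1 N2 -> is_MG E k MG -> is_MC h k MC -> (MG <= 2 * MC + 2)%N.
Proof.
move=> dN cov c1 c2 hub21 hub12 [_ minG] [[A idA] _].
have [f1 [inj1 f1N1 onto1]] := enum_of_card c1.
have [f2 [inj2 f2N2 onto2]] := enum_of_card c2.
apply: (minG _ (doubled_matrix A N1 N2 f1 f2)); first exact: doubled_measurement.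
apply: doubled_identifies => // j.
by case/orP: (cov j) => [/onto1 | /onto2]; [left | right].
Qed.

Lemma two_partition n (E : {set 'I_n * 'I_n}) (A B : {set 'I_n}) :
  [disjoint A & B] -> A :|: B = [set: 'I_n] -> hub E B A -> hub E A B ->
  r_partition E (two_sets A B).
Proof.
move=> dAB cov hBA hAB.
have CA : ~: A = B.
  apply/setP => j; rewrite inE; have := in_setT j; rewrite -cov inE => /orP [] jX.
    by rewrite jX (disjointFr dAB jX).
  by rewrite jX (disjointFl dAB jX).
split; [|split].
- move=> [[|[|i]] hi] // [[|[|j]] hj] // _.
  by rewrite /two_sets /= disjoint_sym.
- by rewrite big_ord_recl big_ord_recl big_ord0 /two_sets /= setU0.
- have CB : ~: B = A by rewrite -CA setCK.
  by move=> i; rewrite /two_sets; case: ifP => _; rewrite ?CA ?CB.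
Qed.

Lemma halves_cover n (A B : {set 'I_n}) : ~~ odd n -> [disjoint A & B] ->
  #|A| = n./2 -> #|B| = n./2 -> A :|: B = [set: 'I_n].
Proof.
move=> even dAB cA cB; apply/eqP; rewrite eqEcard subsetT cardsT card_ord /=.
rewrite cardsU (disjoint_setI0 dAB) cards0 subn0 cA cB.
by move: (odd_double_half n); rewrite (negbTE even) add0n -addnn => ->.
Qed.

Lemma exp_sub1_le x : 0 <= x <= 1 / 2 -> exp x - 1 <= 2 * x.
Proof.
move=> hx.
have inv : exp x * exp (- x) = 1 by rewrite -exp_plus Rplus_opp_r exp_0.
have := exp_ineq1_le (- x); have := exp_pos x; nra.
Qed.

(* The fraction of each side that separates small cuts from large ones. *)
Definition slack (eps : R) : R := eps / (2 * (2 + eps)).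

Lemma slack_bounds eps : 0 < eps -> 0 < slack eps < 1 /\ slack eps * (2 + eps) = eps / 2.
Proof.
move=> heps; have e : slack eps * (2 + eps) = eps / 2 by rewrite /slack; field; lra.
split=> //; split; first by apply: Rdiv_lt_0_compat; lra.
by apply: (Rmult_lt_reg_r (2 + eps)); lra.
Qed.

Section HubCost.
Variables (eps beta c L : R) (m : nat).
Hypotheses (heps : 0 < eps) (hbeta : 2 + eps <= beta) (hc : 0 < c <= 1 / 4).
Hypotheses (hL1 : 1 <= L) (hL4 : 4 * beta <= L) (hm : INR m * 2 = exp L).
Local Notation p := (beta * L / exp L).

Lemma edge_prob_bounds : 0 <= p <= 1.
Proof.
have hN := exp_pos L.
have square : L * L / 4 <= exp L.
  rewrite (_ : L = L / 2 + L / 2) ?exp_plus; last by field.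
  by have := exp_ineq1_le (L / 2); nra.
split; first by apply: Rmult_le_pos; [nra | exact/Rlt_le/Rinv_0_lt_compat].
apply: (Rmult_le_reg_r (exp L)) => //.
by rewrite Rmult_1_l /Rdiv Rmult_assoc Rinv_l; nra.
Qed.

Lemma edge_prob_half : p * INR m = beta * L / 2.
Proof.
have m0 : INR m <> 0 by have := exp_pos L; lra.
by rewrite -hm; field.
Qed.

Lemma cut_cost_small : exp (- (eps / 4 * L)) <= c ->
  (1 + exp (- p * (INR m - slack eps * INR m))) ^ m - 1 <= 2 * c.
Proof.
move=> hsmall; have [[s0 s1] se] := slack_bounds heps.
set y := exp (- p * (INR m - slack eps * INR m)).
have ey : y = exp (- ((1 - slack eps) * beta * L / 2)).
  rewrite /y; congr exp.
  transitivity (- ((1 - slack eps) * (p * INR m))); first ring.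
  by rewrite edge_prob_half; field.
have my : INR m * y <= c.
  apply: Rle_trans hsmall.
  have : INR m * y <= exp L * y.
    by apply: Rmult_le_compat_r; [exact: exp_ge0 | have := pos_INR m; lra].
  suff : exp L * y <= exp (- (eps / 4 * L)) by lra.
  rewrite ey -exp_plus; apply: exp_le.
  have : (2 + eps / 2) * L <= (1 - slack eps) * beta * L.
    apply: Rmult_le_compat_r; first lra.
    by have := Rmult_le_compat_l (1 - slack eps) _ _ (ltac:(lra)) hbeta; lra.
  lra.
have y0 : 0 <= y by exact: exp_ge0.
have my0 : 0 <= INR m * y by apply: Rmult_le_pos; [exact: pos_INR | exact: y0].
have := pow_le_exp m (ltac:(lra) : -1 <= y).
have := exp_sub1_le (ltac:(lra) : 0 <= INR m * y <= 1 / 2).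
lra.
Qed.

Lemma large_cut_cost_small : exp (ln 2 - slack eps * beta / 4 * L) <= c ->
  exp (- p * (slack eps * INR m) * INR m / 2) * 2 ^ m <= c.
Proof.
move=> hsmall; set x := ln 2 - slack eps * beta / 4 * L in hsmall *.
have x0 : x < 0 by apply: Rnot_le_lt => hx; have := exp_ineq1_le x; lra.
have m1 : 1 <= INR m by have := exp_ineq1_le L; lra.
have -> : 2 ^ m = exp (INR m * ln 2) by rewrite -exp_pow exp_ln //; lra.
rewrite -exp_plus; apply: Rle_trans hsmall; apply: exp_le.
have -> : - p * (slack eps * INR m) * INR m / 2 + INR m * ln 2 = INR m * x.
  transitivity (INR m * ln 2 - slack eps * (p * INR m) * INR m / 2).
    by field; exact: exp_neq_0.
  by rewrite edge_prob_half /x; field.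
by nra.
Qed.

Lemma nbr_cost_small : exp (- (eps / 4 * L)) <= c -> INR m * (1 - p) ^ m <= c.
Proof.
move=> hsmall; have [hp0 hp1] := edge_prob_bounds.
have decay : (1 - p) ^ m <= exp (- (beta * L / 2)).
  rewrite -edge_prob_half (_ : - (p * INR m) = INR m * - p); last ring.
  by apply: pow_le_exp; lra.
have : INR m * (1 - p) ^ m <= exp L * exp (- (beta * L / 2)).
  apply: Rmult_le_compat => //; [exact: pos_INR | apply: pow_le; lra | have := pos_INR m; lra].
rewrite -exp_plus => h; apply: Rle_trans h (Rle_trans _ _ _ _ hsmall); apply: exp_le.
have : (2 + eps) * L <= beta * L by apply: Rmult_le_compat_r; lra.
nra.
Qed.

Lemma hub_cost_small : exp (- (eps / 4 * L)) <= c -> exp (ln 2 - slack eps * beta / 4 * L) <= c ->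
  hub_cost p (slack eps * INR m) m m <= 4 * c.
Proof.
move=> h1 h2; rewrite /hub_cost.
by have := cut_cost_small h1; have := large_cut_cost_small h2; have := nbr_cost_small h1; lra.
Qed.

End HubCost.

Definition eventually (P : R -> Prop) : Prop := exists L0, forall L, L0 <= L -> P L.

Lemma eventually_and (P Q : R -> Prop) :
  eventually P -> eventually Q -> eventually (fun L => P L /\ Q L).
Proof.
move=> [a Pa] [b Qb]; exists (Rmax a b) => L hL.
by split; [apply: Pa | apply: Qb]; apply: Rle_trans hL; [apply: Rmax_l | apply: Rmax_r].
Qed.

Lemma eventually_ge a : eventually (fun L => a <= L).
Proof. by exists a. Qed.

Lemma eventually_exp_le a b c : 0 < a -> 0 < c -> eventually (fun L => exp (b - a * L) <= c).
Proof.
move=> ha hc; exists ((b - ln c) / a) => L hL.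
rewrite -[c](exp_ln _ hc); apply: exp_le.
have : a * ((b - ln c) / a) <= a * L by apply: Rmult_le_compat_l; lra.
by rewrite (_ : a * ((b - ln c) / a) = b - ln c); [lra | field; lra].
Qed.

Lemma eventually_ln (P : R -> Prop) : eventually P ->
  exists n0 : nat, forall n, (n0 <= n)%N -> 0 < INR n /\ P (ln (INR n)).
Proof.
move=> [L0 PL0]; have [n0 hn0] := INR_unbounded (exp L0); exists n0 => n hn.
have hn0n : INR n0 <= INR n by apply/le_INR/leP.
have npos : 0 < INR n by have := exp_pos L0; lra.
split=> //; apply/PL0/Rlt_le; rewrite -[L0]ln_exp.
by apply: ln_increasing; [exact: exp_pos | lra].
Qed.

Lemma hub_cost_eventually_small eps beta c :
  0 < eps -> 2 + eps <= beta -> 0 < c <= 1 / 4 ->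
  exists n0 : nat, forall n, (n0 <= n)%N -> ~~ odd n ->
    0 <= beta * ln (INR n) / INR n <= 1 /\
    hub_cost (beta * ln (INR n) / INR n) (slack eps * INR n./2) n./2 n./2 <= 4 * c.
Proof.
move=> heps hbeta hc; have [[s0 _] _] := slack_bounds heps.
have large : eventually (fun L => (1 <= L /\ 4 * beta <= L) /\
    exp (0 - eps / 4 * L) <= c /\ exp (ln 2 - slack eps * beta / 4 * L) <= c).
  do !apply: eventually_and; try apply: eventually_ge.
  - by apply: eventually_exp_le; lra.
  - by apply: eventually_exp_le; [nra | lra].
have [n0 hn0] := eventually_ln large; exists n0 => n hn even.
have [npos [[hL1 hL4] [h1 h2]]] := hn0 n hn; rewrite Rminus_0_l in h1.
set L := ln (INR n) in hL1 hL4 h1 h2 *.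
have eL : exp L = INR n by rewrite exp_ln.
have hm : INR n./2 * 2 = exp L.
  rewrite eL -[in RHS](odd_double_half n) (negbTE even) add0n -muln2 mult_INR.
  by congr Rmult; rewrite /=; ring.
rewrite -eL; split; first exact: edge_prob_bounds heps hbeta hc hL1 hL4 hm.
exact: hub_cost_small heps hbeta hc hL1 hL4 hm h1 h2.
Qed.

Lemma event_of_hubs n (E : {set 'I_n * 'I_n}) (N1 N2 : {set 'I_n}) :
  ~~ odd n -> [disjoint N1 & N2] -> #|N1| = n./2 -> #|N2| = n./2 ->
  hub E N2 N1 -> hub E N1 N2 ->
  r_partition E (two_sets N1 N2) /\
  forall k : nat, (1 <= k)%N -> forall MG MC : nat,
    is_MG E k MG -> is_MC n./2 k MC -> (MG <= 2 * MC + 2)%N.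
Proof.
move=> even dN c1 c2 hub21 hub12; have cov := halves_cover even dN c1 c2.
split; first exact: two_partition.
move=> k _ MG MC; apply: measurement_bound hub21 hub12 => // j.
by rewrite -in_setU cov inE.
Qed.

Theorem theorem8 (eps beta : R) (heps : Rlt 0 eps) (hbeta : Rle (Rplus 2 eps) beta)
  (N1 N2 : forall n : nat, {set 'I_n})
  (hN : forall n : nat, ~~ odd n ->
     [disjoint N1 n & N2 n] /\ #|N1 n| = n./2 /\ #|N2 n| = n./2) :
  forall delta : R, Rlt 0 delta ->
  exists n0 : nat, forall n : nat, (n0 <= n)%N -> ~~ odd n ->
    Rle (Rminus 1 delta)
      (Prob_Gnp (Rdiv (Rmult beta (ln (INR n))) (INR n))
       (fun E => r_partition E (two_sets (N1 n) (N2 n)) /\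
          forall k : nat, (1 <= k)%N -> forall MG MC : nat,
            is_MG E k MG -> is_MC n./2 k MC -> (MG <= 2 * MC + 2)%N)).
Proof.
move=> delta hdelta; set c := Rmin (delta / 8) (1 / 4).
have hc : 0 < c <= 1 / 4 by split; [apply: Rmin_pos; lra | apply: Rmin_r].
have hc8 : c <= delta / 8 by apply: Rmin_l.
have [n0 hn0] := hub_cost_eventually_small heps hbeta hc; exists n0 => n hn even.
have [hp hcost] := hn0 n hn even; have [dN [c1 c2]] := hN n even.
have d21 : [disjoint N2 n & N1 n] by rewrite disjoint_sym.
have hK : 0 <= slack eps * INR n./2.
  by have [[s0 _] _] := slack_bounds heps; apply: Rmult_le_pos; [lra | exact: pos_INR].
(* Union bound over the witnesses for N2 being a hub for N1 and vice versa. *)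
pose witnesses := hub_witnesses (N2 n) (N1 n) ++ hub_witnesses (N1 n) (N2 n).
have sub F : F \in witnesses -> F \subset Epairs n.
  by rewrite mem_cat => /orP [] /hub_witnesses_sub.
apply: Rle_trans (union_bound hp sub _); last first.
  move=> E _ hit; apply: event_of_hubs => //; apply: hub_of_witnesses => F HF;
    by apply: hit; rewrite mem_cat HF ?orbT.
rewrite /witnesses big_cat /=; apply/Rplus_le_compat_l/Ropp_le_contravar.
apply: Rle_trans (Rplus_le_compat _ _ _ _ (hub_witnesses_cost hp hK d21)
                                          (hub_witnesses_cost hp hK dN)) _.
by rewrite c1 c2; lra.
Qed.
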